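(* Let $T^{2,2}$ and $T^{2,3}$ be the policies with $T^{2,2}_i=\mathcal{R}_{2,2}(T_i^* )$ and $T^{2,3}_i=\mathcal{R}_{2,3}(T_i^* )$ for every $i\in[n]$. Both are resource-feasible and $\min\{F(T^{2,2}),F(T^{2,3})\}\le 1.3776\cdot\mathrm{OPT}(P)$.
   Context: An instance consists of integers $n\ge 1$, $D\ge 1$; a joint ordering cost $K_0>0$; for each commodity $i\in[n]$ an ordering cost $K_i>0$ and a holding coefficient $H_i>0$; and resource coefficients $\alpha_{id}\ge 0$. A policy is $T=(T_1,\dots,T_n)\in\mathbb{R}_{>0}^n$; it is resource-feasible if $\sum_{i}\alpha_{id}/T_i\le 1$ for every $d\in[D]$. For $g>0$, $\Delta\ge 0$, $\mathcal{M}_{g,\Delta}=\{0,g,\dots,\lfloor\Delta/g\rfloor g\}$; $N(T,\Delta)=|\bigcup_{i}\mathcal{M}_{T_i,\Delta}|$; $J(T)=K_0\limsup_{\Delta\to\infty}N(T,\Delta)/\Delta$; $F(T)=J(T)+\sum_i(K_i/T_i+H_iT_i)$. The convex relaxation (P) is: minimize $K_0/T_{\min}+\sum_{i\in[n]}(K_i/T_i+H_iT_i)$ over $(T_{\min},T_1,\dots,T_n)$ subject to $T_i\ge T_{\min}\ge0$ for all $i$ and $\sum_i\alpha_{id}/T_i\le1$ for all $d$. $\mathrm{OPT}(P)$ is its optimal value and $T^*=(T^*_{\min},T^*_1,\dots,T^*_n)$ is a fixed optimal solution (with $T^*_{\min}>0$). For integers $m\ge2$, $k\ge1$: $\mathcal{G}_{m,k}=\{m^{p/k}T^*_{\min}:p\in\mathbb{Z}\}$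 and $\mathcal{R}_{m,k}(t)=\min\{g\in\mathcal{G}_{m,k}:g>t\}$ for $t>0$. *)

From HB Require Import structures.
From mathcomp Require Import all_boot all_order all_algebra.
From mathcomp Require Import all_classical all_reals all_analysis.
Set Implicit Arguments. Unset Strict Implicit. Unset Printing Implicit Defensive.
Import Order.TTheory GRing.Theory Num.Theory.
Local Open Scope classical_set_scope.
Local Open Scope ring_scope.

Section Defs.
Variable R : realType.

Definition multiples (g Delta : R) : seq R :=
  [seq j%:R * g | j <- iota 0 (Num.truncn (Delta / g)).+1].

Definition Ncount (n : nat) (T : 'I_n -> R) (Delta : R) : nat :=
  size (undup (flatten [seq multiples (T i) Delta | i <- enum 'I_n])).

Definition limsup_pinfty (g : R -> R) : \bar R :=
  ereal_inf [set ereal_sup [set (g x)%:E | x in [set x | M <= x]] | M in [set: R]].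

Definition Jcost (n : nat) (K0 : R) (T : 'I_n -> R) : \bar R :=
  let ratio := fun Delta : R => ((Ncount T Delta)%:R / Delta)%R in
  (K0%:E * limsup_pinfty ratio)%E.

Definition Fcost (n : nat) (K0 : R) (K H : 'I_n -> R) (T : 'I_n -> R) : \bar R :=
  let S : R := \sum_(i < n) (K i / T i + H i * T i) in
  (Jcost K0 T + S%:E)%E.

Definition resource_feasible (n D : nat) (alpha : 'I_n -> 'I_D -> R)
  (T : 'I_n -> R) : Prop :=
  (forall i, 0 < T i) /\ (forall d : 'I_D, \sum_(i < n) alpha i d / T i <= 1).

Definition Pobj (n : nat) (K0 : R) (K H : 'I_n -> R) (Tmin : R) (T : 'I_n -> R) : R :=
  K0 / Tmin + \sum_(i < n) (K i / T i + H i * T i).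

(* feasibility for (P); Tmin = 0 makes K0/Tmin = +oo, so such points
   never beat a point with Tmin > 0 and are excluded here *)
Definition Pfeasible (n D : nat) (alpha : 'I_n -> 'I_D -> R) (Tmin : R)
  (T : 'I_n -> R) : Prop :=
  0 < Tmin /\ (forall i, Tmin <= T i) /\
  (forall d : 'I_D, \sum_(i < n) alpha i d / T i <= 1).

Definition grid (m k : nat) (Tmin : R) : set R :=
  [set (m%:R `^ ((p%:~R) / k%:R)) * Tmin | p in [set: int]].

(* R_{m,k}(t) = min { g in G_{m,k} : g > t } (the min exists; written as inf) *)
Definition round_up (m k : nat) (Tmin t : R) : R :=
  fine (ereal_inf [set g%:E | g in grid m k Tmin `&` [set g | t < g]]).

End Defs.

From HB Require Import structures.
From mathcomp Require Import all_boot all_order all_algebra.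
From mathcomp Require Import all_classical all_reals all_analysis.
From mathcomp Require Import lra.
Set Implicit Arguments. Unset Strict Implicit. Unset Printing Implicit Defensive.
Import Order.TTheory GRing.Theory Num.Theory.
Local Open Scope classical_set_scope.
Local Open Scope ring_scope.

(* Rounding [T*_i] up to the grid [G_{2,k}] moves it by a factor at most [r = 2^(1/k)], so
   resource feasibility is kept and the ordering/holding part of the cost grows by at most
   [r].  Every rounded period has the form [r^e (r T*_min)]; as [r^k = 2], its multiples
   are multiples of one of the [k] base periods [r^s (r T*_min)], [s < k], so the joint
   ordering rate is at most [K_0/T*_min (r^-1 + ... + r^-k)].  Writing [a = K_0/T*_min] and
   [S] for the rest of [OPT(P)], the two policies cost at most about [1.207 a + 1.414 S]
   and [1.794 a + 1.260 S], and the smaller of the two is below [1.3776 (a + S)]. *)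

Section Rounding.
Variable R : realType.

Definition root2 (k : nat) : R := expR (ln 2 / k%:R).

Lemma ln2_gt0 : 0 < ln (2 : R).
Proof. by apply: ln_gt0; lra. Qed.

Lemma root2_gt0 (k : nat) : 0 < root2 k.
Proof. exact: expR_gt0. Qed.

Lemma root2_expn (k : nat) : (0 < k)%N -> root2 k ^+ k = 2.
Proof.
move=> k0; rewrite /root2 -expRM_natl mulrC divfK ?lnK ?posrE //.
by rewrite pnatr_eq0 -lt0n.
Qed.

Lemma grid2P (k : nat) (Tm h : R) : (0 < k)%N ->
  grid 2 k Tm h <-> exists p : int, h = expR (p%:~R * (ln 2 / k%:R)) * Tm.
Proof.
move=> k0.
have pw (p : int) : 2 `^ (p%:~R / k%:R) = expR (p%:~R * (ln 2 / k%:R)) :> R.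
  by rewrite /powR ifF ?pnatr_eq0 // mulrAC -mulrA.
by split=> [[p _ <-]|[p ->]]; exists p; rewrite ?pw.
Qed.

Lemma round_up_eq (m k : nat) (Tm t g : R) : grid m k Tm g -> t < g ->
  (forall h, grid m k Tm h -> t < h -> g <= h) -> round_up m k Tm t = g.
Proof.
move=> Gg tg gmin; rewrite /round_up.
suff -> : ereal_inf [set h%:E | h in grid m k Tm `&` [set h | t < h]] = g%:E by [].
apply/le_anti/andP; split.
  by apply: ereal_inf_lbound; exists g.
by apply/ereal_infP => _ [h [Gh th] <-]; rewrite lee_fin gmin.
Qed.

Lemma round_up_root2 (k : nat) (Tm t : R) : (0 < k)%N -> 0 < Tm -> Tm <= t ->
  exists e : nat, round_up 2 k Tm t = root2 k ^+ e.+1 * Tm /\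
    t <= round_up 2 k Tm t <= root2 k * t.
Proof.
move=> k0 Tm0 Tmt.
have kR : 0 < k%:R :> R by rewrite ltr0n.
set L : R := ln 2 / k%:R.
have L0 : 0 < L by rewrite divr_gt0 ?ln2_gt0.
(* [t = r^u Tm] with [u] real and [r = root2 k]; round [u] up to an integer *)
set u := ln (t / Tm) / L.
have u0 : 0 <= u by rewrite divr_ge0 ?(ltW L0) // ln_ge0 // ler_pdivlMr // mul1r.
have tE : t = expR (u * L) * Tm.
  by rewrite divfK ?gt_eqF // lnK ?divfK ?gt_eqF // posrE divr_gt0 //; lra.
set e := Num.truncn u; have /andP [eu ue] := truncn_itv u0.
have rE : root2 k ^+ e.+1 * Tm = expR (e.+1%:R * L) * Tm by rewrite expRM_natl.
have -> : round_up 2 k Tm t = root2 k ^+ e.+1 * Tm.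
  apply: round_up_eq.
  - by apply/grid2P => //; exists (Posz e.+1).
  - by rewrite rE tE ltr_pM2r // ltr_expR ltr_pM2r.
  move=> h /grid2P-/(_ k0) [p ->]; rewrite rE tE !ltr_pM2r // ltr_expR ltr_pM2r //.
  move=> up; rewrite ler_pM2r // ler_expR ler_pM2r //.
  have : (e%:Z)%:~R < p%:~R :> R by apply: le_lt_trans up.
  by rewrite ltr_int -lezD1 -(ler_int R) intrD -natr1.
exists e; split => //; rewrite rE {1 2}tE mulrA -expRD !ler_pM2r // !ler_expR -/L.
by rewrite ler_pM2r // (ltW ue) /= -natr1 mulrDl mul1r addrC lerD2l ler_pM2r.
Qed.

Lemma Ncount_le (n k m : nat) (r g Dl : R) (T : 'I_n -> R) (e : 'I_n -> nat) :
  (0 < k)%N -> 0 < r -> r ^+ k = m%:R -> 0 < g -> 0 <= Dl ->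
  (forall i, T i = r ^+ e i * g) ->
  (Ncount T Dl)%:R <= \sum_(0 <= s < k) (Dl / (r ^+ s * g) + 1).
Proof.
move=> k0 r0 rk g0 Dl0 hT.
have gs0 s : 0 < r ^+ s * g by rewrite mulr_gt0 ?exprn_gt0.
(* every multiple of [T i = m^q (r^s g)] is a multiple of the base period [r^s g], [s < k] *)
pose base := flatten [seq multiples (r ^+ s * g) Dl | s <- iota 0 k].
apply: (@le_trans _ _ (size base)%:R).
  rewrite ler_nat; apply: uniq_leq_size; first exact: undup_uniq.
  move=> x; rewrite mem_undup => /flattenP [_ /mapP [i _ ->] /mapP [j]].
  rewrite mem_iota /= add0n ltnS => jle ->.
  set q := (e i %/ k)%N; set s := (e i %% k)%N.
  have Ti : T i = m%:R ^+ q * (r ^+ s * g).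
    by rewrite hT {1}(divn_eq (e i) k) exprD mulnC exprM rk mulrA.
  have Ti0 : 0 < T i by rewrite hT.
  apply/flattenP; exists (multiples (r ^+ s * g) Dl).
    by apply/map_f; rewrite mem_iota add0n ltn_pmod.
  apply/mapP; exists (j * m ^ q)%N; last by rewrite Ti natrM natrX mulrA.
  rewrite mem_iota /= add0n ltnS truncn_ge_nat ?divr_ge0 ?(ltW (gs0 s)) //.
  rewrite natrM natrX ler_pdivlMr // -mulrA -Ti -ler_pdivlMr //.
  by rewrite -truncn_ge_nat // divr_ge0 // ltW.
rewrite size_flatten sumnE /shape -map_comp big_map natr_sum /index_iota subn0.
apply: ler_sum => s _; rewrite /= /multiples size_map size_iota -natr1 lerD2r.
by rewrite truncn_le divr_ge0 // ltW.
Qed.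

Lemma limsup_pinfty_le (f : R -> R) (c b : R) : 0 <= b ->
  (forall x, 0 < x -> f x <= c + b / x) -> (limsup_pinfty f <= c%:E)%E.
Proof.
move=> b0 fle; apply/lee_addgt0Pr => eps eps0.
pose M := b / eps + 1.
have M0 : 0 < M by rewrite ltr_wpDl // divr_ge0 // ltW.
apply: ge_ereal_inf; exists (ereal_sup [set (f x)%:E | x in [set x | M <= x]]).
  by exists M.
apply/ereal_supP => _ [x /= Mx <-]; rewrite -EFinD lee_fin.
have x0 : 0 < x by apply: lt_le_trans Mx.
apply: le_trans (fle x x0) _; rewrite lerD2l ler_pdivrMr //.
apply: le_trans (ler_wpM2l (ltW eps0) Mx).
by rewrite mulrDr mulr1 mulrC divfK ?gt_eqF // lerDl ltW.
Qed.

Lemma Jcost_le (n k m : nat) (K0 r g : R) (T : 'I_n -> R) (e : 'I_n -> nat) :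
  (0 < k)%N -> 0 < r -> r ^+ k = m%:R -> 0 < g -> 0 <= K0 ->
  (forall i, T i = r ^+ e i * g) ->
  (Jcost K0 T <= (K0 * \sum_(0 <= s < k) (r ^+ s * g)^-1)%:E)%E.
Proof.
move=> k0 r0 rk g0 K00 hT; rewrite /Jcost EFinM lee_wpmul2l ?lee_fin //.
apply: (@limsup_pinfty_le _ _ k%:R) => // x x0.
rewrite ler_pdivrMr // mulrDl divfK ?gt_eqF // mulr_suml.
apply: le_trans (Ncount_le k0 r0 rk g0 (ltW x0) hT) _.
rewrite big_split /= sumr_const_nat subn0 lerD2r.
by apply: ler_sum => s _; rewrite mulrC.
Qed.

Lemma cost_le_scale (r Kc Hc t T : R) : 0 <= Kc -> 0 <= Hc -> 0 < t ->
  t <= T <= r * t -> Kc / T + Hc * T <= r * (Kc / t + Hc * t).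
Proof.
move=> Kc0 Hc0 t0 /andP [tT Tr].
have r1 : 1 <= r by rewrite -(ler_pM2r t0) mul1r (le_trans tT).
have T0 : 0 < T by apply: lt_le_trans tT.
rewrite mulrDr lerD //.
  rewrite (@le_trans _ _ (Kc / t)) // ?ler_peMl ?divr_ge0 ?(ltW t0) //.
  by rewrite ler_wpM2l // lef_pV2.
by rewrite mulrCA ler_wpM2l.
Qed.

Lemma resource_feasible_round_up (n D k : nat) (alpha : 'I_n -> 'I_D -> R)
    (Tm : R) (Ts : 'I_n -> R) :
  (0 < k)%N -> (forall i d, 0 <= alpha i d) -> Pfeasible alpha Tm Ts ->
  resource_feasible alpha (fun i => round_up 2 k Tm (Ts i)).
Proof.
move=> k0 alpha0 [Tm0 [hTs feas]].
have Ts_le i : Ts i <= round_up 2 k Tm (Ts i).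
  by have [_ [_ /andP []]] := round_up_root2 k0 Tm0 (hTs i).
have Ts0 i : 0 < Ts i by apply: lt_le_trans (hTs i).
split=> [i | d]; first exact: lt_le_trans (Ts_le i).
apply: le_trans (feas d); apply: ler_sum => i _.
by rewrite ler_wpM2l // lef_pV2 ?posrE // (lt_le_trans (Ts0 i)).
Qed.

Lemma Fcost_round_up_le (n k : nat) (K0 : R) (K H : 'I_n -> R) (Tm : R) (Ts : 'I_n -> R) :
  (0 < k)%N -> 0 <= K0 -> (forall i, 0 <= K i) -> (forall i, 0 <= H i) ->
  0 < Tm -> (forall i, Tm <= Ts i) ->
  (Fcost K0 K H (fun i => round_up 2 k Tm (Ts i)) <=
    (K0 / Tm * \sum_(0 <= s < k) root2 k ^- s.+1 +
     root2 k * \sum_(i < n) (K i / Ts i + H i * Ts i))%:E)%E.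
Proof.
move=> k0 K00 K0i H0i Tm0 hTs.
have [e he] := choice (fun i => round_up_root2 k0 Tm0 (hTs i)).
have rTm0 : 0 < root2 k * Tm by rewrite mulr_gt0 ?root2_gt0.
have hT i : round_up 2 k Tm (Ts i) = root2 k ^+ e i * (root2 k * Tm).
  by rewrite (he i).1 exprSr mulrA.
rewrite /Fcost EFinD leeD //.
  apply: le_trans (Jcost_le k0 (root2_gt0 k) (root2_expn k0) rTm0 K00 hT) _.
  rewrite lee_fin -mulrA ler_wpM2l // mulr_sumr ler_sum // => s _.
  by rewrite mulrA -exprSr invfM mulrC.
rewrite lee_fin mulr_sumr ler_sum // => i _.
by apply: cost_le_scale; rewrite ?(lt_le_trans Tm0) ?(he i).2.
Qed.

Lemma root2_rounding_min_le (a S : R) : 0 <= a -> 0 <= S ->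
  Num.min (a * \sum_(0 <= s < 2) root2 2 ^- s.+1 + root2 2 * S)
          (a * \sum_(0 <= s < 3) root2 3 ^- s.+1 + root2 3 * S)
  <= 13776%:R / 10000%:R * (a + S).
Proof.
move=> a0 S0.
have r2E : root2 2 ^+ 2 = 2 := @root2_expn 2 isT.
have r3E : root2 3 ^+ 3 = 2 := @root2_expn 3 isT.
have -> : \sum_(0 <= s < 2) root2 2 ^- s.+1 = (root2 2)^-1 + 2^-1.
  by rewrite /index_iota /= !big_cons big_nil addr0 expr1 r2E.
have -> : \sum_(0 <= s < 3) root2 3 ^- s.+1 = (root2 3)^-1 + (root2 3 ^+ 2)^-1 + 2^-1.
  by rewrite /index_iota /= !big_cons big_nil addr0 expr1 r3E addrA.
have r20 := root2_gt0 2; have r30 := root2_gt0 3.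
set r2 := root2 2 in r2E r20 *; set r3 := root2 3 in r3E r30 *.
rewrite expr2 in r2E *; rewrite exprS expr2 in r3E.
have [r2l r2u] : 141421%:R / 100000%:R <= r2 /\ r2 <= 141422%:R / 100000%:R.
  by split; nra.
have [r3l r3u] : 125992%:R / 100000%:R <= r3 /\ r3 <= 125993%:R / 100000%:R.
  by split; nra.
have c2 : a * (r2^-1 + 2^-1) <= a * (707112%:R / 1000000%:R + 2^-1).
  by rewrite ler_wpM2l // lerD2r -[r2^-1]mul1r ler_pdivrMr //; lra.
have c3 : a * (r3^-1 + (r3 * r3)^-1 + 2^-1) <=
          a * (793702%:R / 1000000%:R + 629963%:R / 1000000%:R + 2^-1).
  rewrite ler_wpM2l // lerD2r; apply: lerD.
    by rewrite -[r3^-1]mul1r ler_pdivrMr //; lra.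
  by rewrite -[(r3 * r3)^-1]mul1r ler_pdivrMr ?mulr_gt0 //; nra.
have s2 := ler_wpM2r S0 r2u.
have s3 := ler_wpM2r S0 r3u.
(* if the bound for [k = 2] fails then [a < 0.22 S], and then the bound for [k = 3] holds *)
rewrite ge_min; have [//|fail2] := leP (a * (r2^-1 + 2^-1) + r2 * S) (13776%:R / 10000%:R * (a + S)).
rewrite orFb; lra.
Qed.
End Rounding.

Theorem lemma2p4 (R : realType) (n D : nat) (K0 : R) (K H : 'I_n -> R)
  (alpha : 'I_n -> 'I_D -> R) (Tsmin : R) (Ts : 'I_n -> R) :
  (1 <= n)%N -> (1 <= D)%N -> 0 < K0 ->
  (forall i, 0 < K i) -> (forall i, 0 < H i) ->
  (forall i d, 0 <= alpha i d) ->
  Pfeasible alpha Tsmin Ts ->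
  (forall (Tmin : R) (T : 'I_n -> R), Pfeasible alpha Tmin T ->
     Pobj K0 K H Tsmin Ts <= Pobj K0 K H Tmin T) ->
  let T22 := fun i => round_up 2 2 Tsmin (Ts i) in
  let T23 := fun i => round_up 2 3 Tsmin (Ts i) in
  [/\ resource_feasible alpha T22, resource_feasible alpha T23 &
      (Order.min (Fcost K0 K H T22) (Fcost K0 K H T23)
        <= ((13776%:R / 10000%:R) * Pobj K0 K H Tsmin Ts)%:E)%E].
Proof.
move=> _ _ K0_gt0 K_gt0 H_gt0 alpha_ge0 feas _ T22 T23.
split; try exact: resource_feasible_round_up.
have [Tm_gt0 [Tm_le _]] := feas.
have K_ge0 i := ltW (K_gt0 i); have H_ge0 i := ltW (H_gt0 i).
have F22 := Fcost_round_up_le (k := 2) isT (ltW K0_gt0) K_ge0 H_ge0 Tm_gt0 Tm_le.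
have F23 := Fcost_round_up_le (k := 3) isT (ltW K0_gt0) K_ge0 H_ge0 Tm_gt0 Tm_le.
have a_ge0 : 0 <= K0 / Tsmin by rewrite divr_ge0 ?ltW.
have S_ge0 : 0 <= \sum_(i < n) (K i / Ts i + H i * Ts i).
  apply: sumr_ge0 => i _; have Ts_gt0 := lt_le_trans Tm_gt0 (Tm_le i).
  by rewrite addr_ge0 ?divr_ge0 ?mulr_ge0 ?ltW.
have := root2_rounding_min_le a_ge0 S_ge0.
rewrite ge_min => /orP[h|h]; rewrite ge_min; apply/orP.
- by left; apply: le_trans F22 _; rewrite lee_fin.
- by right; apply: le_trans F23 _; rewrite lee_fin.
Qed.
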